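(* Let $r>0$, $R_0>r$, $V_T>0$ and $\Delta V>0$, and put $V_s=\frac{2\pi R_0V_T}{r}+V_T+\Delta V$. Define a sequence by $R_0$ (the given initial radius) and $$R_{i+1}=R_i-\frac{r(V_s-V_T)-2\pi R_iV_T}{V_s+V_T}\quad(i\ge 0),$$ and put $T_{in_i}=\frac{r(V_s-V_T)-2\pi R_iV_T}{V_s(V_s+V_T)}$. Let $N=\min\{n\ge 0: R_n\le r\}$. Define $$T_{in}=\sum_{i=0}^{N-2}T_{in_i}+\frac{R_N}{V_s},\qquad T_{circular}=\sum_{i=0}^{N-1}\frac{2\pi R_i}{V_s}+\frac{2\pi r}{V_s},$$ and $T=T_{circular}+T_{in}$. Then $$N=\left\lceil\frac{\ln\left(\frac{2\pi rV_T-r(V_s-V_T)}{2\pi R_0V_T-r(V_s-V_T)}\right)}{\ln\left(1+\frac{2\pi V_T}{V_s+V_T}\right)}\right\rceil,$$ $$T_{in}=\frac{R_0}{V_s}+\left(1+\frac{2\pi V_T}{V_s+V_T}\right)^{N-1}\frac{2\pi R_0V_T-r(V_s-V_T)}{V_s(V_s+V_T)},$$ and $$T_{circular}=-\frac{R_0(V_s+V_T)}{V_sV_T}+\frac{r(V_s-V_T)(V_s+V_T+2\pi V_TN)}{2\pi V_sV_T^2}+\left(1+\frac{2\pi V_T}{V_s+V_T}\right)^{N}\frac{2\pi R_0V_T-r(V_s-V_T)}{V_sV_T}\cdot\frac{V_s+V_T}{2\pi V_T}+\frac{2\pi r}{V_s}.$$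
   Context: This models a circular sweep process. Evaders, with maximal speed $V_T$, start in a disk of radius $R_0$. A line formation with sensor length $2r$, moving at speed $V_s=V_c+\Delta V$ with critical speed $V_c=2\pi R_0V_T/r+V_T$, repeatedly circles the evader region and then steps inward. $R_i$ is the radius of the circle bounding the evader region after $i$ sweeps. $T_{in_i}$ is the duration of the $i$-th inward advancement. $N$ is the number of iterations needed to reduce the evader region to a disk of radius at most $r$. $T_{in}$ is the total inward-advancement time, which includes a final inward move of duration $R_N/V_s$. $T_{circular}$ is the total time of the circular traversals, which includes a final circular sweep of radius $r$. *)

From HB Require Import structures.
From mathcomp Require Import all_boot all_order all_algebra.
From mathcomp Require Import all_classical all_reals all_analysis.
Set Implicit Arguments. Unset Strict Implicit. Unset Printing Implicit Defensive.
Import Order.TTheory GRing.Theory Num.Theory.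
Local Open Scope ring_scope.

Definition sweep_Vs {R : realType} (r R0 VT dV : R) : R :=
  2 * pi * R0 * VT / r + VT + dV.

Fixpoint sweep_R {R : realType} (r R0 VT Vs : R) (i : nat) : R :=
  match i with
  | 0 => R0
  | i'.+1 => let Ri := sweep_R r R0 VT Vs i' in
             Ri - (r * (Vs - VT) - 2 * pi * Ri * VT) / (Vs + VT)
  end.

Definition sweep_Tin_i {R : realType} (r R0 VT Vs : R) (i : nat) : R :=
  (r * (Vs - VT) - 2 * pi * sweep_R r R0 VT Vs i * VT) / (Vs * (Vs + VT)).

Definition is_min_index {R : realType} (r R0 VT Vs : R) (N : nat) : Prop :=
  sweep_R r R0 VT Vs N <= r /\ (forall n : nat, (n < N)%N -> r < sweep_R r R0 VT Vs n).

(* T_in = sum_{i=0}^{N-2} T_in_i + R_N / Vs (empty sum when N <= 1). *)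
Definition sweep_Tin {R : realType} (r R0 VT Vs : R) (N : nat) : R :=
  \sum_(0 <= i < N.-1) sweep_Tin_i r R0 VT Vs i + sweep_R r R0 VT Vs N / Vs.

Definition sweep_Tcirc {R : realType} (r R0 VT Vs : R) (N : nat) : R :=
  \sum_(0 <= i < N) (2 * pi * sweep_R r R0 VT Vs i / Vs) + 2 * pi * r / Vs.

From HB Require Import structures.
From mathcomp Require Import all_boot all_order all_algebra.
From mathcomp Require Import all_classical all_reals all_analysis.
From mathcomp Require Import ring.
Import Order.TTheory GRing.Theory Num.Theory.
Local Open Scope ring_scope.

(* The radius recursion is affine with fixed point R_fix = r (V_s - V_T) / (2 pi V_T)
   and ratio q = 1 + 2 pi V_T / (V_s + V_T) > 1, i.e. R_{i+1} - R_fix = q (R_i - R_fix),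
   so R_i = R_fix - q^i (R_fix - R_0) with R_fix > R_0.  Hence R_n <= r exactly when
   q^n >= (R_fix - r) / (R_fix - R_0), which pins N down as a ceiling of a ratio of
   logarithms.  The inward times telescope, T_in_i = (R_i - R_{i+1}) / V_s, and
   the circular times form an arithmetic-plus-geometric sum. *)

Lemma affine_recurrenceE {R : pzRingType} {u : nat -> R} {s a : R} :
  (forall n, u n.+1 = s + a * (u n - s)) ->
  forall n, u n = s + a ^+ n * (u 0%N - s).
Proof.
move=> uS; elim=> [|n IHn]; first by rewrite expr0 mul1r addrC subrK.
by rewrite uS IHn addrAC subrr add0r exprS mulrA.
Qed.

Lemma sum_affine_geometric {F : fieldType} (s a c : F) n : a != 1 ->
  \sum_(0 <= i < n) (s + a ^+ i * c) = n%:R * s + c * (a ^+ n - 1) / (a - 1).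
Proof.
move=> a_neq1; rewrite big_split /= sumr_const_nat subn0 -mulr_suml big_mkord.
rewrite subrX1 [c * _]mulrCA mulrAC divff ?subr_eq0// mul1r.
by rewrite mulr_natl mulrC.
Qed.

Section ExprnLn.
Context {R : realType}.

Lemma exprn_geE (q x : R) n : 1 < q -> 0 < x ->
  (x <= q ^+ n) = (ln x / ln q <= n%:R).
Proof.
move=> q_gt1 x_gt0; have q_gt0 : 0 < q by apply: lt_trans q_gt1.
by rewrite ler_pdivrMr ?ln_gt0// mulr_natl -lnXn// ler_ln ?posrE ?exprn_gt0.
Qed.

Lemma exists_exprn_ge {q x : R} : 1 < q -> 0 < x -> exists n, x <= q ^+ n.
Proof.
move=> q_gt1 x_gt0; exists (Num.bound `|ln x / ln q|).
rewrite exprn_geE//; apply: le_trans (ler_norm _) (ltW _).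
exact/archi_boundP.
Qed.

Lemma ceil_ln_div_ln (q x : R) n : 1 < q -> 0 < x ->
  q ^+ n < x <= q ^+ n.+1 -> Num.ceil (ln x / ln q) = n.+1%:Z.
Proof.
move=> q_gt1 x_gt0 /andP[qn_lt qSn_ge]; apply: ceil_def.
have -> : n.+1%:Z - 1 = n by rewrite -addn1 PoszD addrK.
rewrite -!pmulrn -exprn_geE// qSn_ge andbT ltNge -exprn_geE//.
by rewrite -ltNge.
Qed.
End ExprnLn.

Section Sweep.
Context {R : realType} {r R0 VT Vs : R}.
Hypotheses (VT_gt0 : 0 < VT) (Vs_gt0 : 0 < Vs).

Local Notation q := (1 + 2 * pi * VT / (Vs + VT)).
Local Notation Rfix := (r * (Vs - VT) / (2 * pi * VT)).
Local Notation Rs := (sweep_R r R0 VT Vs).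

Let pi_neq0 : pi != 0 :> R. Proof. by rewrite gt_eqF ?pi_gt0. Qed.
Let VT_neq0 : VT != 0. Proof. by rewrite gt_eqF. Qed.
Let Vs_neq0 : Vs != 0. Proof. by rewrite gt_eqF. Qed.
Let VsVT_neq0 : Vs + VT != 0. Proof. by rewrite gt_eqF ?addr_gt0. Qed.

Lemma sweep_q_gt1 : 1 < q.
Proof. by rewrite ltrDl divr_gt0 ?addr_gt0 ?mulr_gt0 ?pi_gt0. Qed.

Lemma sweep_RS n : Rs n.+1 = Rfix + q * (Rs n - Rfix).
Proof.
(* [field] would unfold [pi] (a choice-defined constant), so it is abstracted first. *)
rewrite /=; move: pi_neq0; generalize (@pi R) => p p_neq0.
by field; rewrite VsVT_neq0 VT_neq0 p_neq0.
Qed.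

Lemma sweep_RE n : Rs n = Rfix + q ^+ n * (R0 - Rfix).
Proof. exact: (affine_recurrenceE sweep_RS). Qed.

Lemma sweep_Tin_iE i : sweep_Tin_i r R0 VT Vs i = (Rs i - Rs i.+1) / Vs.
Proof. by rewrite /sweep_Tin_i /=; field; rewrite Vs_neq0 VsVT_neq0. Qed.

Lemma sum_sweep_Tin_i n :
  \sum_(0 <= i < n) sweep_Tin_i r R0 VT Vs i = (R0 - Rs n) / Vs.
Proof.
under eq_bigr do rewrite sweep_Tin_iE -opprB.
by rewrite -mulr_suml sumrN telescope_sumr // opprB.
Qed.

Lemma sweep_offsetE x :
  2 * pi * x * VT - r * (Vs - VT) = - (2 * pi * VT) * (Rfix - x).
Proof.
move: pi_neq0; generalize (@pi R) => p p_neq0.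
by field; rewrite VT_neq0 p_neq0.
Qed.

Let q_sub1 : q - 1 = 2 * pi * VT / (Vs + VT).
Proof. by rewrite addrAC subrr add0r. Qed.

Lemma sum_sweep_R n :
  \sum_(0 <= i < n) Rs i = n%:R * Rfix + (R0 - Rfix) * (q ^+ n - 1) / (q - 1).
Proof.
under eq_bigr do rewrite sweep_RE.
by rewrite sum_affine_geometric // gt_eqF ?sweep_q_gt1.
Qed.

Lemma sweep_TinE N : (0 < N)%N ->
  sweep_Tin r R0 VT Vs N =
    R0 / Vs + q ^+ N.-1 * ((2 * pi * R0 * VT - r * (Vs - VT)) / (Vs * (Vs + VT))).
Proof.
case: N => // N _; rewrite /sweep_Tin [N.+1.-1]/= sum_sweep_Tin_i !sweep_RE exprS.
move: (q ^+ N) pi_neq0; generalize (@pi R) => p t p_neq0.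
by field; rewrite Vs_neq0 VsVT_neq0 VT_neq0 p_neq0.
Qed.

Lemma sweep_TcircE N :
  sweep_Tcirc r R0 VT Vs N =
    - (R0 * (Vs + VT) / (Vs * VT))
    + r * (Vs - VT) * (Vs + VT + 2 * pi * VT * N%:R) / (2 * pi * Vs * VT ^+ 2)
    + q ^+ N * ((2 * pi * R0 * VT - r * (Vs - VT)) / (Vs * VT))
        * ((Vs + VT) / (2 * pi * VT))
    + 2 * pi * r / Vs.
Proof.
rewrite /sweep_Tcirc -mulr_suml -mulr_sumr sum_sweep_R q_sub1.
move: (q ^+ N) pi_neq0; generalize (@pi R) => p t p_neq0.
by field; rewrite Vs_neq0 VsVT_neq0 VT_neq0 p_neq0.
Qed.

Hypotheses (r_lt_R0 : r < R0) (R0_lt_Rfix : R0 < Rfix).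

Local Notation rho := ((Rfix - r) / (Rfix - R0)).

Let rho_gt0 : 0 < rho.
Proof. by rewrite divr_gt0 ?subr_gt0 // (lt_trans r_lt_R0). Qed.

Lemma sweep_R_leE n : (Rs n <= r) = (rho <= q ^+ n).
Proof.
rewrite sweep_RE ler_pdivrMr ?subr_gt0 // -subr_ge0 -[RHS]subr_ge0.
by congr (0 <= _); ring.
Qed.

Lemma exists_sweep_R_le : exists n, Rs n <= r.
Proof.
have [n rho_le] := exists_exprn_ge sweep_q_gt1 rho_gt0.
by exists n; rewrite sweep_R_leE.
Qed.

Lemma is_min_index_gt0 {N} : is_min_index r R0 VT Vs N -> (0 < N)%N.
Proof. by case: N => // -[]; rewrite /= leNgt r_lt_R0. Qed.

Lemma is_min_index_ceil N : is_min_index r R0 VT Vs N ->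
  N%:Z = Num.ceil (ln ((2 * pi * r * VT - r * (Vs - VT))
                       / (2 * pi * R0 * VT - r * (Vs - VT))) / ln q).
Proof.
move=> minN; have := is_min_index_gt0 minN.
case: N minN => // N [RN_le RN_gt] _.
have -> : (2 * pi * r * VT - r * (Vs - VT)) / (2 * pi * R0 * VT - r * (Vs - VT))
          = rho.
  rewrite !sweep_offsetE -mulf_div divff ?mul1r //.
  by rewrite oppr_eq0 !mulf_neq0.
apply/esym/ceil_ln_div_ln; rewrite ?sweep_q_gt1 //.
by rewrite -sweep_R_leE RN_le andbT ltNge -sweep_R_leE -ltNge RN_gt.
Qed.

End Sweep.

Section SweepSpeed.
Context {R : realType} {r R0 VT dV : R}.
Hypotheses (r_gt0 : 0 < r) (R0_gt0 : 0 < R0) (VT_gt0 : 0 < VT) (dV_gt0 : 0 < dV).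

Local Notation Vs := (sweep_Vs r R0 VT dV).

Lemma sweep_Vs_subE : Vs - VT = 2 * pi * R0 * VT / r + dV.
Proof. by rewrite /sweep_Vs addrAC addrK. Qed.

Lemma sweep_Vs_gt0 : 0 < Vs.
Proof.
rewrite -(subrK VT Vs) sweep_Vs_subE !addr_gt0 //.
by rewrite divr_gt0 // !mulr_gt0 ?pi_gt0.
Qed.

Lemma sweep_fix_subE : r * (Vs - VT) / (2 * pi * VT) - R0 = r * dV / (2 * pi * VT).
Proof.
have pi_neq0 : pi != 0 :> R by rewrite gt_eqF ?pi_gt0.
rewrite sweep_Vs_subE; move: pi_neq0; generalize (@pi R) => p p_neq0.
by field; rewrite p_neq0 !gt_eqF.
Qed.

Lemma lt_R0_sweep_fix : R0 < r * (Vs - VT) / (2 * pi * VT).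
Proof.
by rewrite -subr_gt0 sweep_fix_subE divr_gt0 ?mulr_gt0 ?pi_gt0.
Qed.

End SweepSpeed.

Theorem theorem6 (R : realType) (r R0 VT dV : R)
  (hr : 0 < r) (hR0 : r < R0) (hVT : 0 < VT) (hdV : 0 < dV) :
  let Vs := sweep_Vs r R0 VT dV in
  let q := 1 + 2 * pi * VT / (Vs + VT) in
  (exists n : nat, sweep_R r R0 VT Vs n <= r) /\
  forall N : nat, is_min_index r R0 VT Vs N ->
    [/\ (N%:Z = Num.ceil
           (ln ((2 * pi * r * VT - r * (Vs - VT)) / (2 * pi * R0 * VT - r * (Vs - VT)))
            / ln q)),
        sweep_Tin r R0 VT Vs N =
          R0 / Vs + q ^+ N.-1 * ((2 * pi * R0 * VT - r * (Vs - VT)) / (Vs * (Vs + VT)))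
      & sweep_Tcirc r R0 VT Vs N =
          - (R0 * (Vs + VT) / (Vs * VT))
          + r * (Vs - VT) * (Vs + VT + 2 * pi * VT * N%:R) / (2 * pi * Vs * VT ^+ 2)
          + q ^+ N * ((2 * pi * R0 * VT - r * (Vs - VT)) / (Vs * VT))
              * ((Vs + VT) / (2 * pi * VT))
          + 2 * pi * r / Vs].
Proof.
move=> Vs q.
have R0_gt0 : 0 < R0 := lt_trans hr hR0.
have Vs_gt0 : 0 < Vs by apply: sweep_Vs_gt0.
have R0_lt_fix : R0 < r * (Vs - VT) / (2 * pi * VT) by apply: lt_R0_sweep_fix.
split; first exact: exists_sweep_R_le.
move=> N minN; split.
- exact: is_min_index_ceil.
- exact/sweep_TinE/(is_min_index_gt0 hR0 minN).
- exact: sweep_TcircE.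
Qed.
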